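(* For every integer $n\ge 0$, \[ \sum_{k=0}^{n}(-4)^k\frac{\binom{n}{k}}{\binom{2k}{k}}\,k^2H_{2k} =\frac{n(2n+1)\{2H_{2n}-H_n\}}{(2n-1)(2n-3)(2n-5)}-\frac{n(96n^4-280n^3+60n^2+182n-13)}{(2n-1)^2(2n-3)^2(2n-5)^2}. \]
   Context: For an integer $m\ge 0$, $H_m$ denotes the $m$-th harmonic number: $H_0=0$ and $H_m=\sum_{j=1}^m \frac1j$ for $m\ge1$. $\binom{n}{k}$ is the usual binomial coefficient. *)

From HB Require Import structures.
From mathcomp Require Import all_boot all_order all_algebra.
Set Implicit Arguments. Unset Strict Implicit. Unset Printing Implicit Defensive.
Import Order.TTheory GRing.Theory Num.Theory.
Local Open Scope ring_scope.

Definition harmonic (m : nat) : rat := \sum_(1 <= j < m.+1) (j%:R)^-1.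

From HB Require Import structures.
From mathcomp Require Import all_boot all_order all_algebra.
From mathcomp Require Import ring zify.
Import Order.TTheory GRing.Theory Num.Theory.
Local Open Scope ring_scope.

(* Gosper-style telescoping. Writing c_k = (-4)^k C(n,k)/C(2k,k), one has
   c_(k+1)/c_k = 2(k-n)/(2k+1) and c_(n+1) = 0, so for every sequence u the sum
   of c_k (2(k-n)/(2k+1) u_(k+1) - u_k) collapses to -u_0.  Taking
   u_k = r(k) H_(2k) + p(k) with explicit rational functions r and p turns the
   summand into k^2 H_(2k) + beta/(k+1), which leaves the simpler sum of
   c_k/(k+1); that one equals (1 - O_n)/(n+1), with O_n the sum of the first n
   reciprocals of odd numbers, by induction on n through Pascal's rule.
   Finally 2 H_(2n) - H_n = 2 O_n. *)

Lemma mul_central_binS (k : nat) :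
  (k.+1 * 'C(2 * k.+1, k.+1) = 2 * (2 * k).+1 * 'C(2 * k, k))%N.
Proof.
have -> : (2 * k.+1 = (2 * k).+2)%N by lia.
rewrite -mul_bin_diag /= -mulnA (mul_bin_down (2 * k).+1 k).
have -> : ((2 * k).+1 - k = k.+1)%N by lia.
lia.
Qed.

Section CentralBinomialSums.
Context {R : numFieldType}.
Implicit Types n k : nat.

Definition cbin_coef n k : R := (-4) ^+ k * ('C(n, k)%:R / 'C(2 * k, k)%:R).

Definition odd_harmonic n : R := \sum_(0 <= j < n) (2 * j%:R + 1)^-1.

Lemma natr1_neq0 k : k%:R + 1 != 0 :> R.
Proof. by rewrite natr1 pnatr_eq0. Qed.

Lemma natr_double1_neq0 k : 2 * k%:R + 1 != 0 :> R.
Proof. by rewrite -natrM natr1 pnatr_eq0. Qed.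

Lemma natr_double_sub_odd_neq0 n m : odd m -> 2 * n%:R - m%:R != 0 :> R.
Proof.
move=> odd_m; rewrite subr_eq0 -natrM eqr_nat.
by apply: contraTneq odd_m => <-; rewrite oddM.
Qed.

Lemma central_bin_neq0 k : 'C(2 * k, k)%:R != 0 :> R.
Proof. by rewrite pnatr_eq0 -lt0n bin_gt0; lia. Qed.

Lemma cbin_coef0 n : cbin_coef n 0 = 1.
Proof. by rewrite /cbin_coef bin0 muln0 bin0 expr0 mul1r divr1. Qed.

Lemma cbin_coef_small n : cbin_coef n n.+1 = 0.
Proof. by rewrite /cbin_coef bin_small // mul0r mulr0. Qed.

Lemma cbin_coefS n k : (k <= n)%N ->
  cbin_coef n k.+1 = cbin_coef n k * (2 * (k%:R - n%:R)) / (2 * k%:R + 1).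
Proof.
move=> le_kn.
have binS_eq : 'C(n, k.+1)%:R = (n%:R - k%:R) * 'C(n, k)%:R / (k%:R + 1) :> R.
  apply: (mulfI (natr1_neq0 k)); rewrite natr1 -natrM mul_bin_left natrM natrB //.
  by rewrite -natr1; field; rewrite natr1_neq0.
have cbinS_eq : 'C(2 * k.+1, k.+1)%:R
    = 2 * (2 * k%:R + 1) * 'C(2 * k, k)%:R / (k%:R + 1) :> R.
  have := congr1 (fun m => m%:R : R) (mul_central_binS k).
  rewrite /= !natrM -!natr1 natrM => cast.
  by apply: (mulfI (natr1_neq0 k)); rewrite cast; field; rewrite natr1_neq0.
rewrite /cbin_coef binS_eq cbinS_eq exprS; field.
by rewrite natr1_neq0 natr_double1_neq0 central_bin_neq0.
Qed.

Lemma sum_cbin_coef_telescope n (u : nat -> R) :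
  \sum_(0 <= k < n.+1) cbin_coef n k * (2 * (k%:R - n%:R) / (2 * k%:R + 1) * u k.+1 - u k)
  = - u 0%N.
Proof.
rewrite (telescope_sumr_eq (fun k => cbin_coef n k * u k)) //.
  by rewrite cbin_coef_small cbin_coef0 mul0r mul1r sub0r.
by move=> k /andP[_ lt_kn]; rewrite cbin_coefS //; ring.
Qed.

Lemma sum_cbin_coef n : \sum_(0 <= k < n.+1) cbin_coef n k = - (2 * n%:R - 1)^-1.
Proof.
have nz : 2 * n%:R - 1 != 0 :> R by exact: (@natr_double_sub_odd_neq0 n 1).
have nz' : 1 - 2 * n%:R != 0 :> R by rewrite -opprB oppr_eq0.
have telescoped := sum_cbin_coef_telescope n (fun k => (2 * k%:R - 1) / (1 - 2 * n%:R)).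
rewrite (_ : (2 * n%:R - 1)^-1 = (2 * 0%:R - 1) / (1 - 2 * n%:R)).
  rewrite -telescoped; apply: eq_bigr => k _; rewrite -[LHS]mulr1 -natr1; congr (_ * _).
  by field; rewrite natr_double1_neq0 nz'.
by field; rewrite nz nz'.
Qed.

Lemma sum_cbin_coef_binS n :
  \sum_(0 <= k < n.+1) (-4) ^+ k * ('C(n.+1, k.+1)%:R / 'C(2 * k, k)%:R)
  = 1 - odd_harmonic n :> R.
Proof.
elim: n => [|n IHn].
  by rewrite /odd_harmonic big_nat1 big_geq // expr0 bin1 muln0 bin0 divr1 mul1r subr0.
rewrite (eq_bigr (fun k => (-4) ^+ k * ('C(n.+1, k.+1)%:R / 'C(2 * k, k)%:R)
                           + cbin_coef n.+1 k)); last first.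
  by move=> k _; rewrite /cbin_coef binS natrD mulrDl mulrDr.
rewrite big_split /= big_nat_recr //= bin_small // mul0r mulr0 addr0.
rewrite IHn sum_cbin_coef /odd_harmonic big_nat_recr //= -[n.+1%:R]natr1.
have -> : 2 * (n%:R + 1) - 1 = 2 * n%:R + 1 :> R by ring.
ring.
Qed.

Lemma sum_cbin_coef_div_succ n :
  \sum_(0 <= k < n.+1) cbin_coef n k / (k%:R + 1) = (1 - odd_harmonic n) / (n%:R + 1).
Proof.
rewrite -sum_cbin_coef_binS mulr_suml; apply: eq_bigr => k _.
have binSS : 'C(n.+1, k.+1)%:R = (n%:R + 1) * 'C(n, k)%:R / (k%:R + 1) :> R.
  apply: (mulfI (natr1_neq0 k)); rewrite !natr1 -!natrM -mul_bin_diag natrM.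
  by field; rewrite addrC natr1_neq0.
by rewrite /cbin_coef binSS; field; rewrite !natr1_neq0 central_bin_neq0.
Qed.

(* The certificate of the header: [cert_r N K], [cert_p N K] and [cert_beta N]
   are r(k), p(k) and beta at N = n, K = k; [cert_step] is the identity that
   determines them. *)
Definition cert_den (N : R) : R := (2 * N - 1) * (2 * N - 3) * (2 * N - 5).

Definition cert_r (N K : R) : R :=
  (2 * N + 4 * N ^+ 2 + (-2 + 4 * N - 16 * N ^+ 2) * K
   + (7 - 24 * N + 20 * N ^+ 2) * K ^+ 2 + (-6 + 16 * N - 8 * N ^+ 2) * K ^+ 3)
  / cert_den N.

Definition cert_p (N K : R) : R :=
  (17 * N + 150 * N ^+ 2 - 52 * N ^+ 3 - 152 * N ^+ 4 + 64 * N ^+ 5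
   + (13 - 189 * N + 48 * N ^+ 2 - 104 * N ^+ 3 + 368 * N ^+ 4 - 144 * N ^+ 5) * K
   + (7 - 72 * N + 192 * N ^+ 2 - 112 * N ^+ 3 - 112 * N ^+ 4 + 64 * N ^+ 5) * K ^+ 2
   + (-36 + 192 * N - 352 * N ^+ 2 + 256 * N ^+ 3 - 64 * N ^+ 4) * K ^+ 3)
  / cert_den N ^+ 2.

Definition cert_beta (N : R) : R := (2 * N + 6 * N ^+ 2 + 4 * N ^+ 3) / cert_den N.

Lemma cert_den_neq0 n : cert_den n%:R != 0.
Proof.
rewrite /cert_den !mulf_eq0 !negb_or (@natr_double_sub_odd_neq0 n 1) //.
by rewrite (@natr_double_sub_odd_neq0 n 3) // (@natr_double_sub_odd_neq0 n 5).
Qed.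

(* h stands for H_(2k); H_(2k+2) = h + 1/(2k+1) + 1/(2k+2). *)
Lemma cert_step (N K h : R) :
  cert_den N != 0 -> 2 * K + 1 != 0 -> K + 1 != 0 ->
  2 * (K - N) / (2 * K + 1)
    * (cert_r N (K + 1) * (h + (2 * K + 1)^-1 + (2 * K + 2)^-1) + cert_p N (K + 1))
  - (cert_r N K * h + cert_p N K)
  = K ^+ 2 * h + cert_beta N / (K + 1).
Proof.
move=> nz_den nz_2K1 nz_K1.
have nz_2K2 : 2 * K + 2 != 0.
  by rewrite (_ : 2 * K + 2 = 2 * (K + 1)) ?mulf_neq0 ?pnatr_eq0 //; ring.
move: nz_den; rewrite /cert_r /cert_p /cert_beta /cert_den.
rewrite !mulf_eq0 !negb_or => /andP[/andP[nz1 nz3] nz5].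
by field; rewrite nz1 nz3 nz5 nz_2K1 nz_K1 nz_2K2.
Qed.

End CentralBinomialSums.

Lemma harmonic0 : harmonic 0 = 0.
Proof. by rewrite /harmonic big_geq. Qed.

Lemma harmonic_doubleS (k : nat) :
  harmonic (2 * k.+1) = harmonic (2 * k) + (2 * k%:R + 1)^-1 + (2 * k%:R + 2)^-1.
Proof.
rewrite /harmonic (_ : (2 * k.+1 = (2 * k).+2)%N); last by lia.
rewrite [in LHS]big_nat_recr //= [in LHS]big_nat_recr //=.
have -> : (2 * k).+1%:R = 2 * k%:R + 1 :> rat by rewrite -addn1 natrD natrM.
by have -> : (2 * k).+2%:R = 2 * k%:R + 2 :> rat by rewrite -addn2 natrD natrM.
Qed.

Lemma harmonic_double_sub (n : nat) :
  2 * harmonic (2 * n) - harmonic n = 2 * odd_harmonic n.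
Proof.
elim: n => [|n IHn]; first by rewrite muln0 harmonic0 /odd_harmonic big_geq // mulr0 subr0.
rewrite harmonic_doubleS {2}/harmonic big_nat_recr //= -/(harmonic n).
rewrite /odd_harmonic big_nat_recr //= -/(odd_harmonic n).
rewrite [in RHS]mulrDr -IHn -[n.+1%:R]natr1.
have nz_2n2 : 2 * n%:R + 2 != 0 :> rat.
  by rewrite (_ : 2 * n%:R + 2 = 2 * (n%:R + 1)) ?mulf_neq0 ?pnatr_eq0 ?natr1_neq0 //; ring.
by field; rewrite natr_double1_neq0 natr1_neq0 nz_2n2.
Qed.

Theorem theorem3 (n : nat) :
  \sum_(0 <= k < n.+1)
     (-4 : rat) ^+ k * ('C(n, k)%:R / 'C(2 * k, k)%:R) * (k%:R ^+ 2) * harmonic (2 * k)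
  = let N : rat := n%:R in
    N * (2 * N + 1) * (2 * harmonic (2 * n) - harmonic n)
      / ((2 * N - 1) * (2 * N - 3) * (2 * N - 5))
    - N * (96 * N ^+ 4 - 280 * N ^+ 3 + 60 * N ^+ 2 + 182 * N - 13)
      / ((2 * N - 1) ^+ 2 * (2 * N - 3) ^+ 2 * (2 * N - 5) ^+ 2).
Proof.
have telescoped := sum_cbin_coef_telescope n
  (fun k => cert_r n%:R k%:R * harmonic (2 * k) + cert_p n%:R k%:R).
rewrite /= muln0 harmonic0 mulr0 add0r in telescoped.
have split_sum : \sum_(0 <= k < n.+1) cbin_coef n k * (k%:R ^+ 2 * harmonic (2 * k))
    + cert_beta n%:R * \sum_(0 <= k < n.+1) cbin_coef n k / (k%:R + 1) = - cert_p n%:R 0.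
  rewrite -telescoped mulr_sumr -big_split /=; apply: eq_bigr => k _.
  rewrite harmonic_doubleS -[k.+1%:R]natr1.
  by rewrite cert_step ?cert_den_neq0 ?natr_double1_neq0 ?natr1_neq0 // mulrDr
    [cbin_coef n k * (cert_beta _ / _)]mulrCA.
rewrite (eq_bigr (fun k => cbin_coef n k * (k%:R ^+ 2 * harmonic (2 * k)))); last first.
  by move=> k _; rewrite /cbin_coef !mulrA.
rewrite (canRL (addrK _) split_sum) sum_cbin_coef_div_succ /= harmonic_double_sub.
move: (cert_den_neq0 (R := rat) n) (natr1_neq0 (R := rat) n).
rewrite /cert_beta /cert_p /cert_den !mulf_eq0 !negb_or => /andP[/andP[nz1 nz3] nz5] nz_N1.
by field; rewrite nz1 nz3 nz5 nz_N1.
Qed.
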